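(* Let $\mathcal{H}_1,\mathcal{H}_2$ be finite-dimensional Hilbert spaces of dimensions $d_1,d_2$, and let $f:\mathcal{L}(\mathcal{H}_1)\to\mathcal{L}(\mathcal{H}_2)$ be a linear, unitarity-preserving map with $f(\mathbb{1}_1)=\mathbb{1}_2$. Then $d_2/d_1$ is an integer, and whenever $|\psi\rangle\langle\psi|,|\phi\rangle\langle\phi|\in\mathcal{L}(\mathcal{H}_1)$ are two orthogonal projectors onto pure states, $f(|\psi\rangle\langle\psi|)$ and $f(|\phi\rangle\langle\phi|)$ are two orthogonal projectors of rank $d_2/d_1$.
   Context: A map $f:\mathcal{L}(\mathcal{H}_1)\to\mathcal{L}(\mathcal{H}_2)$ is unitarity preserving if $f(U)$ is unitary for every unitary $U\in\mathcal{L}(\mathcal{H}_1)$. $\mathbb{1}_k$ is the identity on $\mathcal{H}_k$. *)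

From HB Require Import structures.
From mathcomp Require Import all_boot all_order all_algebra.
From mathcomp Require Import complex.
From mathcomp Require Import reals.
Set Implicit Arguments. Unset Strict Implicit. Unset Printing Implicit Defensive.
Import Order.TTheory GRing.Theory Num.Theory.
Local Open Scope ring_scope.

Definition adjmx (C : numClosedFieldType) (m n : nat) (A : 'M[C]_(m, n)) : 'M[C]_(n, m) :=
  (map_mx Num.conj A)^T.

Definition unitary_mx (C : numClosedFieldType) (n : nat) (U : 'M[C]_n) : Prop :=
  U *m adjmx U = 1%:M /\ adjmx U *m U = 1%:M.

Definition orth_proj (C : numClosedFieldType) (n : nat) (P : 'M[C]_n) : Prop :=
  P *m P = P /\ adjmx P = P.

Definition unit_vec (C : numClosedFieldType) (n : nat) (psi : 'cV[C]_n) : Prop :=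
  adjmx psi *m psi = 1%:M.

Definition ketbra (C : numClosedFieldType) (n : nat) (psi : 'cV[C]_n) : 'M[C]_n :=
  psi *m adjmx psi.

From HB Require Import structures.
From mathcomp Require Import all_boot all_order all_algebra.
From mathcomp Require Import complex reals ring.
Import Order.TTheory GRing.Theory Num.Theory.
Local Open Scope ring_scope.
Set Implicit Arguments. Unset Strict Implicit. Unset Printing Implicit Defensive.

(* For an orthogonal projector P and |b| = 1, 1 + (b - 1) P is unitary, so
   1 + (b - 1) f(P) is unitary for all such b; taking b = i and b = -i forces
   f(P) to be an orthogonal projector.  Orthogonal projectors P, Q go to
   orthogonal ones, because f(P + Q) is again a projector.  For orthogonal
   vectors u, v of equal norm, the projectors onto the lines through u + t v
   (t real) yield identities in t showing that Z = f(|u><v| + |v><u|) maps the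
   range of f(|u><u|) onto that of f(|v><v|) and back, so the two have equal
   rank.  Hence tr (f M) = k tr M, and M = 1 gives d2 = k d1. *)

Section Adjoint.
Context {C : numClosedFieldType}.

Lemma adjmxM m n p (A : 'M[C]_(m, n)) (B : 'M[C]_(n, p)) :
  adjmx (A *m B) = adjmx B *m adjmx A.
Proof. by rewrite /adjmx map_mxM trmx_mul. Qed.

Lemma adjmxD m n (A B : 'M[C]_(m, n)) : adjmx (A + B) = adjmx A + adjmx B.
Proof. by rewrite /adjmx map_mxD linearD. Qed.

Lemma adjmxZ m n a (A : 'M[C]_(m, n)) : adjmx (a *: A) = a^* *: adjmx A.
Proof. by rewrite /adjmx map_mxZ linearZ. Qed.

Lemma adjmxK m n (A : 'M[C]_(m, n)) : adjmx (adjmx A) = A.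
Proof. by apply/matrixP => i j; rewrite !mxE conjCK. Qed.

Lemma adjmx0 m n : adjmx (0 : 'M[C]_(m, n)) = 0.
Proof. by rewrite /adjmx map_mx0 trmx0. Qed.

Lemma adjmx_scalar n a : adjmx (a%:M : 'M[C]_n) = a^*%:M.
Proof. by rewrite /adjmx map_scalar_mx tr_scalar_mx. Qed.

Lemma adjmx_delta m n (i : 'I_m) (j : 'I_n) :
  adjmx (delta_mx i j : 'M[C]_(m, n)) = delta_mx j i.
Proof. by rewrite /adjmx map_delta_mx trmx_delta. Qed.

Lemma orth_proj_ketbra n (w : 'cV[C]_n) (c : C) :
  c != 0 -> adjmx w *m w = c%:M -> orth_proj (c^-1 *: ketbra w).
Proof.
move=> c_neq0 ww; have c_real : c^* = c.
  have := congr1 (fun M => adjmx M) ww; rewrite adjmxM adjmxK ww adjmx_scalar.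
  by move/matrixP/(_ 0 0); rewrite !mxE.
split; last by rewrite adjmxZ /ketbra adjmxM adjmxK fmorphV /= c_real.
rewrite /ketbra -scalemxAl -scalemxAr scalerA mulmxA -(mulmxA w) ww.
by rewrite mul_mx_scalar -scalemxAl scalerA mulfVK.
Qed.

Lemma orth_projD n (P Q : 'M[C]_n) :
  orth_proj P -> orth_proj Q -> P *m Q = 0 -> orth_proj (P + Q).
Proof.
move=> [PP Padj] [QQ Qadj] PQ.
have QP : Q *m P = 0 by rewrite -Padj -Qadj -adjmxM PQ adjmx0.
by split; rewrite ?adjmxD ?Padj ?Qadj // mulmxDl !mulmxDr PP QQ PQ QP addr0 add0r.
Qed.

Lemma idem_affine_mul n (P : 'M[C]_n) x y : P *m P = P ->
  (1%:M + x *: P) *m (1%:M + y *: P) = 1%:M + (x + y + x * y) *: P.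
Proof.
move=> PP; rewrite mulmxDl !mulmxDr !mul1mx !mulmx1 -scalemxAl -scalemxAr PP scalerA.
by rewrite !scalerDl !addrA (addrAC 1%:M (y *: P)).
Qed.

Lemma unitary_phase n (P : 'M[C]_n) b : orth_proj P -> b * b^* = 1 ->
  unitary_mx (1%:M + (b - 1) *: P).
Proof.
move=> [PP Padj] bb.
have U_adj : adjmx (1%:M + (b - 1) *: P) = 1%:M + (b^* - 1) *: P.
  by rewrite adjmxD adjmx_scalar adjmxZ Padj conjC1 rmorphB /= conjC1.
have coef0 : b - 1 + (b^* - 1) + (b - 1) * (b^* - 1) = 0.
  have -> : b - 1 + (b^* - 1) + (b - 1) * (b^* - 1) = b * b^* - 1 by ring.
  by rewrite bb subrr.
rewrite /unitary_mx U_adj !idem_affine_mul // coef0 [_ + (b - 1)]addrC mulrC coef0.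
by rewrite scale0r addr0.
Qed.

Lemma unitary_affine_eq0 n (A : 'M[C]_n) x : unitary_mx (1%:M + x *: A) ->
  x *: A + x^* *: adjmx A + (x * x^*) *: (A *m adjmx A) = 0.
Proof.
move=> [U_Uadj _]; apply: (addrI 1%:M); rewrite addr0 -[RHS]U_Uadj.
rewrite adjmxD adjmx_scalar conjC1 adjmxZ mulmxDl !mulmxDr !mul1mx mulmx1.
by rewrite -scalemxAl -scalemxAr scalerA !addrA (addrAC 1%:M (x *: A)).
Qed.

Lemma orth_proj_of_phases n (A : 'M[C]_n) :
  (forall b, b * b^* = 1 -> unitary_mx (1%:M + (b - 1) *: A)) -> orth_proj A.
Proof.
move=> phaseU.
(* For b = i, -i we have b - 1 = x, x^* with x = i - 1: the difference of the
   two unitarity identities is 2i (A - A^dagger), and then either one reads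
   2 (A^2 - A) = 0. *)
have i_unit : 'i * 'i^* = 1 :> C by rewrite conjCi mulrN mulCii opprK.
have Ni_unit : - 'i * (- 'i)^* = 1 :> C.
  by rewrite rmorphN /= conjCi opprK mulNr mulCii opprK.
have Ex := unitary_affine_eq0 (phaseU _ i_unit).
have Ex' := unitary_affine_eq0 (phaseU _ Ni_unit).
set x : C := 'i - 1 in Ex Ex'.
have x_conj : x^* = - 'i - 1 by rewrite rmorphB /= conjCi conjC1.
rewrite -x_conj conjCK [x^* * x]mulrC in Ex'.
have x_not_real : x - x^* != 0.
  have -> : x - x^* = 2 * 'i by rewrite x_conj /x; ring.
  by rewrite mulf_neq0 ?pnatr_eq0 ?neq0Ci.
have x_norm : x * x^* = 2.
  have -> : x * x^* = 1 - 'i * 'i by rewrite x_conj /x; ring.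
  by rewrite mulCii opprK.
have A_adj : adjmx A = A.
  apply/matrixP => i j; move/matrixP/(_ i j): Ex; move/matrixP/(_ i j): Ex'.
  rewrite !mxE; move: (A i j) ((A j i)^*) (\sum_k _) => p q s Ex' Ex.
  have : (x - x^*) * (p - q) = (x * p + x^* * q + x * x^* * s)
                               - (x^* * p + x * q + x * x^* * s) by ring.
  rewrite Ex Ex' subrr => /eqP.
  by rewrite mulf_eq0 (negPf x_not_real) subr_eq0 eq_sym => /eqP.
have x_re : x + x^* = - 2 by rewrite x_conj /x; ring.
split=> //; move: Ex; rewrite A_adj -scalerDl x_norm x_re scaleNr addrC -scalerBr.
by move/eqP; rewrite scalemx_eq0 pnatr_eq0 subr_eq0 => /eqP.
Qed.

Lemma orth_proj_ketbra_unit n (psi : 'cV[C]_n) :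
  unit_vec psi -> orth_proj (ketbra psi).
Proof.
by move=> unit_psi; have := orth_proj_ketbra (oner_neq0 C) unit_psi; rewrite invr1 scale1r.
Qed.

Lemma adjmx_delta_mul n (j l : 'I_n) :
  adjmx (delta_mx j 0 : 'cV[C]_n) *m delta_mx l 0 = (j == l)%:R%:M.
Proof.
rewrite adjmx_delta mul_delta_mx_cond.
by case: eqP => _; apply/matrixP => a b; rewrite !ord1 !mxE.
Qed.

Lemma adjmx_basis2_mul n (j l : 'I_n) b b' : j != l ->
  adjmx (delta_mx j 0 + b *: delta_mx l 0 : 'cV[C]_n) *m (delta_mx j 0 + b' *: delta_mx l 0)
  = (1 + b^* * b')%:M.
Proof.
move=> jl; rewrite adjmxD adjmxZ mulmxDl !mulmxDr -!scalemxAl -!scalemxAr.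
rewrite !adjmx_delta_mul !eqxx (negPf jl) eq_sym (negPf jl).
by apply/matrixP => a a'; rewrite !ord1 !mxE /=; ring.
Qed.

Lemma ketbra_delta n (j : 'I_n) : ketbra (delta_mx j 0 : 'cV[C]_n) = delta_mx j j.
Proof. by rewrite /ketbra adjmx_delta mul_delta_mx. Qed.

Lemma orth_proj_delta n (j : 'I_n) : orth_proj (delta_mx j j : 'M[C]_n).
Proof.
by rewrite -ketbra_delta; apply/orth_proj_ketbra_unit; rewrite /unit_vec adjmx_delta_mul eqxx.
Qed.

Lemma ketbra_basis2 n (j l : 'I_n) b :
  ketbra (delta_mx j 0 + b *: delta_mx l 0 : 'cV[C]_n)
  = delta_mx j j + b^* *: delta_mx j l + b *: delta_mx l j + (b * b^*) *: delta_mx l l.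
Proof.
rewrite /ketbra adjmxD adjmxZ !adjmx_delta mulmxDl !mulmxDr -!scalemxAl -!scalemxAr.
by rewrite !mul_delta_mx scalerA !addrA.
Qed.

End Adjoint.

Lemma mxtrace_idempotent (F : fieldType) n (A : 'M[F]_n) :
  A *m A = A -> \tr A = (\rank A)%:R.
Proof.
move=> AA; have := mulmx_base A; have := row_base_free A; have := col_base_full A.
move: (col_base A) (row_base A) => cb rb cb_full rb_free factor.
have rb_cb : rb *m cb = 1%:M.
  apply: (row_free_inj rb_free); apply: (row_full_inj cb_full).
  by rewrite mul1mx !mulmxA factor -mulmxA factor AA.
by rewrite -{1}factor mxtrace_mulC rb_cb mxtrace1.
Qed.

Section Idempotents.
Variables (F : numFieldType) (n : nat).
Implicit Types A B Z : 'M[F]_n.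

Lemma idempotent_sum_orthogonal A B :
  A *m A = A -> B *m B = B -> (A + B) *m (A + B) = A + B -> A *m B = 0.
Proof.
move=> AA BB; rewrite mulmxDl !mulmxDr AA BB => sum_idem.
have anticomm : A *m B + B *m A = 0.
  apply: (addrI (A + B)); rewrite addr0 -[RHS]sum_idem.
  by rewrite addrACA [B + _]addrC.
have /eqP := congr1 (mulmx A) anticomm.
rewrite mulmxDr !mulmxA AA mulmx0 addr_eq0 => /eqP AB.
have /eqP := congr1 (mulmx^~ A) anticomm.
rewrite /= mulmxDl -[B *m A *m A]mulmxA AA mul0mx addrC addr_eq0 -AB => /eqP BA.
move/eqP: anticomm; rewrite -BA -mulr2n -scaler_nat scalemx_eq0 pnatr_eq0 /=.
by move/eqP.
Qed.

Lemma cubic_coefs_eq0 (p q r : F) :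
  (forall k : nat, k%:R * p + k%:R ^+ 2 * q + k%:R ^+ 3 * r = 0) ->
  [/\ p = 0, q = 0 & r = 0].
Proof.
pose L (k : nat) := k%:R * p + k%:R ^+ 2 * q + k%:R ^+ 3 * r.
move=> L0; have {}L0 k : L k = 0 := L0 k.
have eq0 (c x : F) : c != 0 -> c * x = 0 -> x = 0.
  by move=> c_neq0 /eqP; rewrite mulf_eq0 (negPf c_neq0) => /eqP.
have p6 : 6 * p = 18 * L 1 - 9 * L 2 + 2 * L 3 by rewrite /L; ring.
have q2 : 2 * q = 4 * L 2 - 5 * L 1 - L 3 by rewrite /L; ring.
have r6 : 6 * r = 3 * L 1 - 3 * L 2 + L 3 by rewrite /L; ring.
rewrite !L0 !mulr0 ?subrr ?add0r ?subr0 ?addr0 in p6 q2 r6.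
by split; [apply: eq0 p6 | apply: eq0 q2 | apply: eq0 r6]; rewrite pnatr_eq0.
Qed.

Lemma idempotent_pencil A B Z :
  A *m A = A -> B *m B = B -> A *m B = 0 -> B *m A = 0 ->
  (forall k : nat, let G := A + k%:R ^+ 2 *: B + k%:R *: Z in
     G *m G = (1 + k%:R ^+ 2) *: G) ->
  [/\ Z *m Z = A + B, A *m Z + Z *m A = Z & B *m Z + Z *m B = Z].
Proof.
move=> AA BB AB BA pencil.
have cubic k : k%:R *: (A *m Z + Z *m A - Z) + k%:R ^+ 2 *: (Z *m Z - (A + B))
                 + k%:R ^+ 3 *: (B *m Z + Z *m B - Z) = 0.
  move/eqP: (pencil k); rewrite -subr_eq0 => /eqP <-.
  rewrite /= !mulmxDl !mulmxDr -!scalemxAl -!scalemxAr AA BB AB BA !scaler0.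
  by apply/matrixP => i j; rewrite !mxE; ring.
suff [X1 X2 X3] : [/\ A *m Z + Z *m A - Z = 0, Z *m Z - (A + B) = 0
                     & B *m Z + Z *m B - Z = 0].
  by split; apply/eqP; rewrite -subr_eq0; apply/eqP.
move: (A *m Z + Z *m A - Z) (Z *m Z - (A + B)) (B *m Z + Z *m B - Z) cubic.
move=> X1 X2 X3 cubic.
have coefs i j : [/\ X1 i j = 0, X2 i j = 0 & X3 i j = 0].
  by apply: cubic_coefs_eq0 => k; have /matrixP/(_ i j) := cubic k; rewrite !mxE.
by split; apply/matrixP => i j; rewrite mxE; case: (coefs i j).
Qed.

Lemma mxrank_le_swap A B Z :
  A *m A = A -> B *m A = 0 -> Z *m Z = A + B -> B *m Z + Z *m B = Z ->
  (\rank A <= \rank B)%N.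
Proof.
move=> AA BA ZZ swap.
have ZA : Z *m A = B *m (Z *m A).
  by rewrite -{1}swap mulmxDl -!mulmxA BA mulmx0 addr0.
have -> : A = A *m Z *m B *m (Z *m A).
  rewrite -mulmxA -ZA mulmxA -(mulmxA A) ZZ mulmxDr mulmxDl -(mulmxA A B) BA.
  by rewrite mulmx0 addr0 !AA.
exact: leq_trans (mxrankM_maxl _ _) (mxrankM_maxr _ _).
Qed.

Lemma scaleV_idempotent (s : F) A :
  s != 0 -> (s^-1 *: A) *m (s^-1 *: A) = s^-1 *: A -> A *m A = s *: A.
Proof.
move=> s_neq0 idem; rewrite -(scalerKV s_neq0 A) -scalemxAl -scalemxAr.
by rewrite idem.
Qed.

End Idempotents.

Section UnitaryPreserving.
Variables (C : numClosedFieldType) (n m : nat) (f : {linear 'M[C]_n -> 'M[C]_m}).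
Hypothesis f_unitary : forall U, unitary_mx U -> unitary_mx (f U).
Hypothesis f1 : f 1%:M = 1%:M.

Lemma f_orth_proj P : orth_proj P -> orth_proj (f P).
Proof.
move=> projP; apply: orth_proj_of_phases => b bb.
by rewrite -f1 -linearZ -linearD; apply/f_unitary/unitary_phase.
Qed.

Lemma f_orth_proj_mul0 P Q :
  orth_proj P -> orth_proj Q -> P *m Q = 0 -> f P *m f Q = 0.
Proof.
move=> projP projQ PQ.
apply: idempotent_sum_orthogonal (f_orth_proj projP).1 (f_orth_proj projQ).1 _.
by rewrite -linearD; exact: (f_orth_proj (orth_projD projP projQ PQ)).1.
Qed.

Section OrthogonalPair.
Variables (u v : 'cV[C]_n) (c : C).
Hypotheses (c_neq0 : c != 0) (uu : adjmx u *m u = c%:M) (vv : adjmx v *m v = c%:M).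
Hypothesis uv : adjmx u *m v = 0.

Let vu : adjmx v *m u = 0.
Proof. by rewrite -[u]adjmxK -adjmxM uv adjmx0. Qed.

Let Pu := c^-1 *: ketbra u.
Let Pv := c^-1 *: ketbra v.
Let Zuv := c^-1 *: (u *m adjmx v + v *m adjmx u).

(* The projector onto the line through u + t v is (Pu + t^2 Pv + t Zuv) / (1 + t^2). *)
Lemma f_pencil (t : C) : t^* = t -> 1 + t ^+ 2 != 0 ->
  let G := f Pu + t ^+ 2 *: f Pv + t *: f Zuv in G *m G = (1 + t ^+ 2) *: G.
Proof.
move=> t_real t_neq0 /=; set w := u + t *: v.
have ww : adjmx w *m w = ((1 + t ^+ 2) * c)%:M.
  rewrite adjmxD adjmxZ t_real mulmxDl !mulmxDr -!scalemxAl -!scalemxAr.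
  rewrite uu vv uv vu !scaler0 addr0 add0r.
  by apply/matrixP => i j; rewrite !mxE; ring.
have expand : ((1 + t ^+ 2) * c)^-1 *: ketbra w
               = (1 + t ^+ 2)^-1 *: (Pu + t ^+ 2 *: Pv + t *: Zuv).
  rewrite /Pu /Pv /Zuv /w /ketbra adjmxD adjmxZ t_real mulmxDl !mulmxDr.
  rewrite -!scalemxAl -!scalemxAr.
  move: (u *m adjmx u) (u *m adjmx v) (v *m adjmx u) (v *m adjmx v) => UU UV VU VV.
  by apply/matrixP => i j; rewrite !mxE invfM; ring.
have f_expand : f (((1 + t ^+ 2) * c)^-1 *: ketbra w)
                 = (1 + t ^+ 2)^-1 *: (f Pu + t ^+ 2 *: f Pv + t *: f Zuv).
  rewrite expand linearZ; congr (_ *: _); rewrite !linearD.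
  by congr (_ + _ + _); rewrite linearZ.
apply: (scaleV_idempotent t_neq0); rewrite -f_expand.
exact: (f_orth_proj (orth_proj_ketbra (mulf_neq0 t_neq0 c_neq0) ww)).1.
Qed.

Lemma f_rank_ketbra_orthogonal : \rank (f Pu) = \rank (f Pv).
Proof.
have projPu := orth_proj_ketbra c_neq0 uu; have projPv := orth_proj_ketbra c_neq0 vv.
have PuPv : Pu *m Pv = 0.
  rewrite /Pu /Pv /ketbra -!scalemxAl -!scalemxAr mulmxA -(mulmxA u) uv.
  by rewrite mulmx0 mul0mx !scaler0.
have PvPu : Pv *m Pu = 0.
  rewrite /Pu /Pv /ketbra -!scalemxAl -!scalemxAr mulmxA -(mulmxA v) vu.
  by rewrite mulmx0 mul0mx !scaler0.
have [AA _] := f_orth_proj projPu; have [BB _] := f_orth_proj projPv.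
have AB := f_orth_proj_mul0 projPu projPv PuPv.
have BA := f_orth_proj_mul0 projPv projPu PvPu.
have k_neq0 (k : nat) : 1 + k%:R ^+ 2 != 0 :> C.
  by rewrite addrC -natrX natr1 pnatr_eq0.
have pencil (k : nat) := f_pencil (conjC_nat _ k) (k_neq0 k).
have [ZZ AZ BZ] := idempotent_pencil AA BB AB BA pencil.
apply/eqP; rewrite eqn_leq (mxrank_le_swap AA BA ZZ BZ).
by rewrite (mxrank_le_swap BB AB _ AZ) // addrC.
Qed.

Lemma mxtrace_f_ketbra_orthogonal : \tr (f (ketbra u)) = \tr (f (ketbra v)).
Proof.
have scale_proj (w : 'cV[C]_n) : ketbra w = c *: (c^-1 *: ketbra w) by rewrite scalerKV.
rewrite (scale_proj u) (scale_proj v) ![f (c *: _)]linearZ !mxtraceZ.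
rewrite !mxtrace_idempotent ?(f_orth_proj (orth_proj_ketbra c_neq0 _)).1 //.
by rewrite f_rank_ketbra_orthogonal.
Qed.

End OrthogonalPair.

Lemma mxtrace_f_delta_diag (j l : 'I_n) :
  j != l -> \tr (f (delta_mx j j)) = \tr (f (delta_mx l l)).
Proof.
move=> jl; rewrite -!ketbra_delta.
apply: (mxtrace_f_ketbra_orthogonal (oner_neq0 C)); rewrite adjmx_delta_mul ?eqxx //.
by rewrite (negPf jl) /= raddf0.
Qed.

Lemma mxtrace_f_delta_phase (j l : 'I_n) b : j != l -> b * b^* = 1 ->
  b^* * \tr (f (delta_mx j l)) + b * \tr (f (delta_mx l j)) = 0.
Proof.
move=> jl bb; have two_neq0 : 2 != 0 :> C by rewrite pnatr_eq0.
have : \tr (f (ketbra (delta_mx j 0 + b *: delta_mx l 0)))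
       = \tr (f (ketbra (delta_mx j 0 + (- b) *: delta_mx l 0))).
  apply: (mxtrace_f_ketbra_orthogonal two_neq0); rewrite adjmx_basis2_mul //.
  - by rewrite mulrC bb.
  - by rewrite rmorphN /= mulrNN mulrC bb.
  by rewrite mulrN mulrC bb subrr raddf0.
rewrite !ketbra_basis2 !linearD !linearZ /= rmorphN /= mulrNN !mulNr.
rewrite -!addrA => /addrI; rewrite !addrA => /addIr; rewrite -opprD.
by move/eqP; rewrite -addr_eq0 -mulr2n mulrn_eq0 /= => /eqP.
Qed.

Lemma mxtrace_f_delta_offdiag (j l : 'I_n) :
  j != l -> \tr (f (delta_mx j l)) = 0.
Proof.
move=> jl; have i_unit : 'i * 'i^* = 1 :> C by rewrite conjCi mulrN mulCii opprK.
have one_unit : 1 * 1^* = 1 :> C by rewrite conjC1 mulr1.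
have := mxtrace_f_delta_phase jl i_unit; have := mxtrace_f_delta_phase jl one_unit.
rewrite conjC1 conjCi !mul1r; move: (\tr (f _)) (\tr (f _)) => t_lj t_jl real imag.
have : 2 * 'i * t_jl = 'i * (t_jl + t_lj) - (- 'i * t_jl + 'i * t_lj) by ring.
rewrite real imag mulr0 subrr => /eqP.
by rewrite !mulf_eq0 pnatr_eq0 (negPf (neq0Ci C)) => /eqP.
Qed.

Lemma mxtrace_f (j0 : 'I_n) M : \tr (f M) = \tr M * \tr (f (delta_mx j0 j0)).
Proof.
rewrite {1}(matrix_sum_delta M) linear_sum raddf_sum /= [\tr M]/mxtrace mulr_suml.
apply: eq_bigr => i _; rewrite linear_sum raddf_sum (bigD1 i) //= big1 ?addr0.
  rewrite linearZ mxtraceZ /=; congr (_ * _).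
  by have [->|i_j0] := eqVneq i j0; last exact: mxtrace_f_delta_diag.
by move=> l li; rewrite linearZ mxtraceZ /= mxtrace_f_delta_offdiag 1?eq_sym ?mulr0.
Qed.

Lemma f_dim (j0 : 'I_n) : m = (\rank (f (delta_mx j0 j0)) * n)%N.
Proof.
have /f_orth_proj[idem _] := orth_proj_delta (C := C) j0.
apply/eqP; rewrite -(eqr_nat C) natrM -mxtrace_idempotent // -[m%:R]mxtrace1 -f1.
by rewrite (mxtrace_f j0) mxtrace1 mulrC.
Qed.

Lemma mxrank_f_ketbra (j0 : 'I_n) psi :
  unit_vec psi -> \rank (f (ketbra psi)) = \rank (f (delta_mx j0 j0)).
Proof.
move=> unit_psi; have /f_orth_proj[idem_psi _] := orth_proj_ketbra_unit unit_psi.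
have /f_orth_proj[idem0 _] := orth_proj_delta (C := C) j0.
apply/eqP; rewrite -(eqr_nat C) -!mxtrace_idempotent // (mxtrace_f j0).
by rewrite /ketbra mxtrace_mulC unit_psi mxtrace1 mul1r.
Qed.

End UnitaryPreserving.

Theorem lemma1 (R : realType) (d1 d2 : nat) (hd1 : (0 < d1)%N) (hd2 : (0 < d2)%N)
  (f : 'M[R[i]]_d1 -> 'M[R[i]]_d2)
  (f_lin : forall (a : R[i]) (A B : 'M[R[i]]_d1), f (a *: A + B) = a *: f A + f B)
  (f_unit : forall U : 'M[R[i]]_d1, unitary_mx U -> unitary_mx (f U))
  (f_one : f 1%:M = 1%:M) :
  exists k : nat, d2 = (k * d1)%N /\
    forall psi phi : 'cV[R[i]]_d1,
      unit_vec psi -> unit_vec phi -> adjmx psi *m phi = 0 ->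
      [/\ orth_proj (f (ketbra psi)), orth_proj (f (ketbra phi)),
          f (ketbra psi) *m f (ketbra phi) = 0,
          \rank (f (ketbra psi)) = k & \rank (f (ketbra phi)) = k].
Proof.
pose fL : {linear 'M[R[i]]_d1 -> 'M[R[i]]_d2} :=
  HB.pack f (GRing.isLinear.Build _ _ _ _ f f_lin).
have fL_unit : forall U, unitary_mx U -> unitary_mx (fL U) := f_unit.
pose j0 : 'I_d1 := Ordinal hd1.
exists (\rank (f (delta_mx j0 j0))); split; first exact: (f_dim fL_unit f_one j0).
move=> psi phi unit_psi unit_phi psi_phi.
have proj_psi := orth_proj_ketbra_unit unit_psi.
have proj_phi := orth_proj_ketbra_unit unit_phi.
have psi_phi_mul : ketbra psi *m ketbra phi = 0.
  by rewrite /ketbra mulmxA -(mulmxA psi) psi_phi mulmx0 mul0mx.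
split.
- exact: (f_orth_proj fL_unit f_one proj_psi).
- exact: (f_orth_proj fL_unit f_one proj_phi).
- exact: (f_orth_proj_mul0 fL_unit f_one proj_psi proj_phi psi_phi_mul).
- exact: (mxrank_f_ketbra fL_unit f_one j0 unit_psi).
- exact: (mxrank_f_ketbra fL_unit f_one j0 unit_phi).
Qed.
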